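(* Let $K=u^2\partial_u-2(1+uR)\partial_R$. Then $$\hat g(K,K)=4u^2\Big(1+Ru+\tfrac14R^2u^2f(R)\Big).$$ Furthermore, the following are equivalent: - $f(0)>\frac34$; - there exist $u_0<0$ and $c>0$ such that $\hat g(K,K)\ge c\,u^2$ on $\Omega_{u_0}$ (i.e. $K$ is uniformly timelike on $\Omega_{u_0}$).
   Context: Let $a>0$ and let $f$ be an analytic positive function on $[0,a)$. On a manifold with coordinates $(u,R,\omega)\in\mathbb R\times[0,a)\times S^2$ consider $$\hat g=R^2f(R)\,du^2-2\,du\,dR-d\omega^2,$$ with future null infinity $\mathscr I^+=\{R=0\}$. Put $r=1/R$. Fix a function $r_*$ of $r$ with $\frac{dr_*}{dr}=\frac1{f(1/r)}$ (equivalently $dR=-R^2f(R)\,dr_*$), and set $t=u+r_*$. For $u_0<0$, let $\Omega_{u_0}=\{t\ge0\}\cap\{u<u_0\}$. *)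

From Stdlib Require Import Reals.
From Coquelicot Require Import Coquelicot.
Open Scope R_scope.

Definition analytic_on_0a (a : R) (f : R -> R) : Prop :=
  forall x0, 0 <= x0 < a ->
    exists (c : nat -> R) (d : R), 0 < d /\
      forall x, 0 <= x < a -> Rabs (x - x0) < d -> is_pseries c (x - x0) (f x).

(* The metric  g^ = R^2 f(R) du^2 - 2 du dR - dω^2, in coordinates
   (u, R, θ, φ) with dω^2 = dθ^2 + sin^2 θ dφ^2, evaluated at the point
   with coordinates R = Rc, θ = th on the vectors X = (Xu,XR,Xt,Xp),
   Y = (Yu,YR,Yt,Yp) (components along ∂u, ∂R, ∂θ, ∂φ). *)
Definition ghat (f : R -> R) (Rc th : R)
  (Xu XR Xt Xp Yu YR Yt Yp : R) : R :=
  Rc ^ 2 * f Rc * Xu * Yu - (Xu * YR + XR * Yu)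
  - (Xt * Yt + (sin th) ^ 2 * Xp * Yp).

Definition K_u (u Rc : R) : R := u ^ 2.
Definition K_R (u Rc : R) : R := -2 * (1 + u * Rc).

Definition gKK (f : R -> R) (u Rc th : R) : R :=
  ghat f Rc th (K_u u Rc) (K_R u Rc) 0 0 (K_u u Rc) (K_R u Rc) 0 0.

(* The region Ω_{u0} = {t >= 0} ∩ {u < u0}, t = u + r_*(r), r = 1/R, on the
   manifold R in [0,a).  On I^+ = {R = 0} (r = +∞) we have r_* = +∞
   (since r_*' = 1/f(1/r) -> 1/f(0) > 0), so t = +∞ >= 0 there. *)
Definition in_Omega (a : R) (rstar : R -> R) (u0 u Rc : R) : Prop :=
  0 <= Rc < a /\ u < u0 /\ (Rc = 0 \/ (0 < Rc /\ 0 <= u + rstar (/ Rc))).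

From Stdlib Require Import Reals Lra.
From Coquelicot Require Import Coquelicot.
Open Scope R_scope.

(* A direct computation gives
     g^(K,K) = 4 u^2 q_F(x),   q_F(x) = 1 + x + F x^2 / 4,   x = R u, F = f(R).
   The quadratic q_G is positive on [-1/G, oo) exactly when G > 3/4, since
   q_G(-1/G) = 1 - 3/(4G).  On Omega_{u0} with R > 0 we have -u <= r_*(r),
   r = 1/R, and the mean value theorem applied to r_*' = 1/f(1/r) shows that
   r_*(r) grows like r / f(0):
   - if f(0) > 3/4, pick 3/4 < G < f(0); then r_* <= C + r/G, so on Omega_{u0}
     (u0 very negative) R is small and x = R u >= -1/G - (small), where q_G,
     hence q_{f(R)}, is bounded below by a positive constant;
   - if f(0) <= 3/4, pick f(0) < G < G' close to f(0); then r_* >= r/G - C, so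
     the points (u, R) = (-r/G', 1/r) lie in Omega_{u0} for r large, and there
     x = -1/G' and q_{f(R)}(-1/G') is as small as we like, contradicting any
     uniform bound g^(K,K) >= c u^2.
   The file first treats the quadratic q_F, then continuity of the analytic f
   at 0 and the mean value estimates for r_*, and combines them at the end. *)

Definition kquad (F x : R) : R := 1 + x + / 4 * x ^ 2 * F.

Lemma gKK_formula (f : R -> R) (u Rc th : R) :
  gKK f u Rc th = 4 * u ^ 2 * (1 + Rc * u + / 4 * Rc ^ 2 * u ^ 2 * f Rc).
Proof. unfold gKK, ghat, K_u, K_R. field. Qed.

Lemma gKK_kquad (f : R -> R) (u Rc th : R) :
  gKK f u Rc th = 4 * u ^ 2 * kquad (f Rc) (Rc * u).
Proof. rewrite gKK_formula. unfold kquad. ring. Qed.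

Lemma kquad_mono (F F' x : R) : F <= F' -> kquad F x <= kquad F' x.
Proof. intros hF. unfold kquad. pose proof (pow2_ge_0 x). nra. Qed.

(* Lower bound for q_G slightly to the left of -1/G: q_G(-1/G) = 1 - 3/(4G),
   and q_G is increasing on [-2/G, oo), which contains [-1/G - eta, oo). *)
Lemma kquad_lower (G eta x : R) :
  0 < G -> 0 <= eta -> G * eta <= 1 -> - (/ G + eta) <= x ->
  1 - 3 / (4 * G) - eta / 2 <= kquad G x.
Proof.
  intros hG heta hGeta hx.
  set (X := / G + eta) in *.
  assert (hGX : G * X = 1 + G * eta) by (unfold X; field; lra).
  assert (hvertex : kquad G (- X) = 1 - 3 / (4 * G) - eta / 2 + / 4 * G * eta ^ 2)
    by (unfold kquad, X; field; lra).
  assert (hdiff : kquad G x - kquad G (- X) = (x + X) * (1 + G * (x - X) / 4))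
    by (unfold kquad; field).
  assert (0 <= G * (x + X)) by (apply Rmult_le_pos; lra).
  assert (0 <= 1 + G * (x - X) / 4) by nra.
  assert (0 <= (x + X) * (1 + G * (x - X) / 4)) by (apply Rmult_le_pos; lra).
  assert (0 <= G * eta ^ 2) by (apply Rmult_le_pos; [lra | apply pow2_ge_0]).
  lra.
Qed.

Lemma kquad_upper (G G' : R) :
  0 < G -> G <= G' -> kquad G (- / G') <= 1 - 3 / (4 * G').
Proof.
  intros hG hGG'.
  assert (kquad G (- / G') = 1 - / G' + / 4 * (G / G' ^ 2)) by (unfold kquad; field; lra).
  assert (G / G' ^ 2 <= / G').
  { replace (/ G') with (G' / G' ^ 2) by (field; lra).
    apply Rmult_le_compat_r; [|lra].
    left; apply Rinv_0_lt_compat, pow2_gt_0; lra. }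
  replace (3 / (4 * G')) with (3 / 4 * / G') by (field; lra).
  lra.
Qed.

Lemma kquad_uniform_margin (G : R) :
  3 / 4 < G ->
  exists k eta, 0 < k <= 1 /\ 0 < eta /\
    forall x, - (/ G + eta) <= x -> k <= kquad G x.
Proof.
  intros hG.
  set (k := (1 - 3 / (4 * G)) / 2).
  assert (hk : 0 < k <= 1).
  { assert (3 / (4 * G) * (4 * G) = 3) by (field; lra).
    assert (0 < 3 / (4 * G)) by (apply Rdiv_lt_0_compat; lra).
    assert (3 / (4 * G) < 1) by nra.
    unfold k; lra. }
  assert (hiG : 0 < / G) by (apply Rinv_0_lt_compat; lra).
  exists k, (Rmin (/ G) (2 * k)).
  pose proof (Rmin_l (/ G) (2 * k)). pose proof (Rmin_r (/ G) (2 * k)).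
  assert (heta : 0 < Rmin (/ G) (2 * k)) by (apply Rmin_case; lra).
  split; [exact hk|]. split; [exact heta|]. intros x hx.
  apply Rle_trans with (1 - 3 / (4 * G) - Rmin (/ G) (2 * k) / 2).
  - assert (1 - 3 / (4 * G) = 2 * k) by (unfold k; field; lra). lra.
  - apply kquad_lower; [lra | lra | | exact hx].
    rewrite <- (Rinv_r G) by lra. apply Rmult_le_compat_l; lra.
Qed.

Lemma kquad_below_threshold (F eps : R) :
  0 < F <= 3 / 4 -> 0 < eps ->
  kquad (F + eps) (- / (F + 2 * eps)) <= 2 * eps / F.
Proof.
  intros hF heps.
  apply Rle_trans with (1 - 3 / (4 * (F + 2 * eps))); [apply kquad_upper; lra|].
  replace (1 - 3 / (4 * (F + 2 * eps))) with ((F + 2 * eps - 3 / 4) / (F + 2 * eps))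
    by (field; lra).
  apply Rle_trans with (2 * eps / (F + 2 * eps)).
  - apply Rmult_le_compat_r; [left; apply Rinv_0_lt_compat|]; lra.
  - apply Rmult_le_compat_l; [lra|]. apply Rinv_le_contravar; lra.
Qed.

Lemma pseries_radius_ge (c : nat -> R) (x : R) :
  ex_pseries c x -> Rbar_le (Rabs x) (CV_radius c).
Proof.
  intros hser.
  destruct (filterlim_bounded (fun n => scal (pow_n x n) (c n)))
    as [M hM]; [exists 0; exact (ex_series_lim_0 _ hser)|].
  apply (proj1 (CV_radius_bounded c)). exists M. intros n.
  specialize (hM n). rewrite pow_n_pow in hM.
  rewrite Rabs_mult, RPow_abs, Rabs_Rabsolu, <- Rabs_mult, Rmult_comm. exact hM.
Qed.

(* An analytic function on [0,a) is right-continuous at 0, being the sum of a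
   power series with positive radius there. *)
Lemma analytic_right_continuous_at_0 (a : R) (f : R -> R) :
  0 < a -> analytic_on_0a a f ->
  forall eps, 0 < eps ->
    exists del, 0 < del /\ forall x, 0 <= x < del -> Rabs (f x - f 0) < eps.
Proof.
  intros ha hf eps heps.
  destruct (hf 0) as [c [d [hd hc]]]; [lra|].
  set (x1 := Rmin d a / 2).
  assert (hx1 : 0 < x1 /\ x1 < d /\ x1 < a)
    by (unfold x1; pose proof (Rmin_l d a); pose proof (Rmin_r d a);
        apply Rmin_case_strong; intros; lra).
  assert (hser : forall x, 0 <= x <= x1 -> is_pseries c x (f x)).
  { intros x hx. specialize (hc x). rewrite Rminus_0_r in hc.
    apply hc; [lra|]. rewrite Rabs_pos_eq; lra. }
  assert (hcont : continuity_pt (PSeries c) 0).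
  { apply PSeries_continuity. rewrite Rabs_R0.
    apply Rbar_lt_le_trans with x1; [simpl; lra|].
    rewrite <- (Rabs_pos_eq x1) by lra.
    apply pseries_radius_ge. eexists. apply hser. lra. }
  destruct (hcont eps heps) as [alp [halp hnear]].
  exists (Rmin alp x1). split; [apply Rmin_case; lra|].
  intros x hx. pose proof (Rmin_l alp x1). pose proof (Rmin_r alp x1).
  destruct (Req_dec x 0) as [->|hx0]; [rewrite Rminus_diag, Rabs_R0; exact heps|].
  rewrite <- (is_pseries_unique _ _ _ (hser x ltac:(lra))).
  rewrite <- (is_pseries_unique _ _ _ (hser 0 ltac:(lra))).
  apply hnear. split; [split; [exact I | lra]|].
  simpl. unfold R_dist. rewrite Rminus_0_r, Rabs_pos_eq; lra.
Qed.

Lemma analytic_between_near_0 (a : R) (f : R -> R) (lo hi : R) :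
  0 < a -> analytic_on_0a a f -> lo < f 0 < hi ->
  exists del, 0 < del /\ forall x, 0 <= x < del -> lo < f x < hi.
Proof.
  intros ha hf hlh.
  destruct (analytic_right_continuous_at_0 a f ha hf (Rmin (f 0 - lo) (hi - f 0)))
    as [del [hdel hnear]]; [apply Rmin_case; lra|].
  exists del. split; [exact hdel|]. intros x hx.
  destruct (Rabs_def2 _ _ (hnear x hx)).
  pose proof (Rmin_l (f 0 - lo) (hi - f 0)). pose proof (Rmin_r (f 0 - lo) (hi - f 0)).
  lra.
Qed.

Lemma mvt_interval (h d : R -> R) (p q : R) :
  p <= q -> (forall r, p <= r <= q -> is_derive h r (d r)) ->
  exists s, p <= s <= q /\ h q - h p = d s * (q - p).
Proof.
  intros hpq hder.
  destruct (MVT_gen h p q d) as [s [hs e]];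
    rewrite ?Rmin_left, ?Rmax_right in * by lra.
  - intros r hr. apply hder. lra.
  - intros r hr. apply continuity_pt_filterlim.
    apply (ex_derive_continuous (K := R_AbsRing) (V := R_NormedModule)).
    eexists. apply hder. lra.
  - exists s. split; assumption.
Qed.

Lemma growth_le_of_deriv_le (h d : R -> R) (p q m : R) :
  p <= q -> (forall r, p <= r <= q -> is_derive h r (d r)) ->
  (forall r, p <= r <= q -> d r <= m) -> h q <= h p + m * (q - p).
Proof.
  intros hpq hder hm.
  destruct (mvt_interval h d p q hpq hder) as [s [hs e]].
  assert (d s * (q - p) <= m * (q - p)) by (apply Rmult_le_compat_r; [lra | auto]).
  lra.
Qed.

Lemma growth_ge_of_deriv_ge (h d : R -> R) (p q m : R) :
  p <= q -> (forall r, p <= r <= q -> is_derive h r (d r)) ->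
  (forall r, p <= r <= q -> m <= d r) -> h p + m * (q - p) <= h q.
Proof.
  intros hpq hder hm.
  destruct (mvt_interval h d p q hpq hder) as [s [hs e]].
  assert (m * (q - p) <= d s * (q - p)) by (apply Rmult_le_compat_r; [lra | auto]).
  lra.
Qed.

Lemma inv_beyond (a r : R) : 0 < a -> / a < r -> 0 < / r < a.
Proof.
  intros ha har. assert (0 < / a) by (apply Rinv_0_lt_compat; lra).
  split; [apply Rinv_0_lt_compat; lra|].
  rewrite <- (Rinv_inv a). apply Rinv_lt_contravar; [nra | lra].
Qed.

Lemma far_radius (a del : R) :
  0 < a -> 0 < del -> exists r1, / a < r1 /\ forall r, r1 <= r -> / r < del.
Proof.
  intros ha hdel.
  assert (0 < / a) by (apply Rinv_0_lt_compat; lra).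
  assert (0 < / del) by (apply Rinv_0_lt_compat; lra).
  exists (/ a + / del + 1). split; [lra|]. intros r hr.
  apply (inv_beyond del r hdel). lra.
Qed.

Section Exterior.

Variables (a : R) (f rstar : R -> R).
Hypothesis ha : 0 < a.
Hypothesis hf_pos : forall x, 0 <= x < a -> 0 < f x.
Hypothesis hrstar : forall r, / a < r -> is_derive rstar r (/ f (/ r)).

Lemma rstar_deriv_pos (r : R) : / a < r -> 0 < / f (/ r).
Proof.
  intros hr. destruct (inv_beyond a r ha hr).
  apply Rinv_0_lt_compat, hf_pos. lra.
Qed.

Lemma rstar_upper_linear (G r1 : R) :
  0 < G -> / a < r1 -> (forall s, r1 <= s -> G < f (/ s)) ->
  exists C, 0 <= C /\ forall r, / a < r -> rstar r <= C + r / G.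
Proof.
  intros hG hr1 hfG.
  assert (hia : 0 < / a) by (apply Rinv_0_lt_compat; lra).
  exists (Rabs (rstar r1)). split; [apply Rabs_pos|]. intros r hr.
  pose proof (Rle_abs (rstar r1)).
  assert (0 <= r / G) by (apply Rdiv_le_0_compat; lra).
  destruct (Rle_lt_dec r r1) as [hle | hlt].
  - assert (rstar r + 0 * (r1 - r) <= rstar r1); [|lra].
    apply (growth_ge_of_deriv_ge rstar (fun s => / f (/ s)));
      [lra | intros; apply hrstar; lra |].
    intros s hs. left. apply rstar_deriv_pos. lra.
  - assert (rstar r <= rstar r1 + / G * (r - r1)).
    { apply (growth_le_of_deriv_le rstar (fun s => / f (/ s)));
        [lra | intros; apply hrstar; lra |].
      intros s hs. left. apply Rinv_lt_contravar; [|apply hfG; lra].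
      apply Rmult_lt_0_compat; [lra|]. apply Rlt_trans with G; [lra | apply hfG; lra]. }
    assert (0 <= / G * r1) by (apply Rmult_le_pos; [left; apply Rinv_0_lt_compat|]; lra).
    unfold Rdiv in *. lra.
Qed.

Lemma rstar_lower_linear (G r1 : R) :
  0 < G -> / a < r1 -> (forall s, r1 <= s -> f (/ s) < G) ->
  exists C, 0 <= C /\ forall r, r1 <= r -> r / G - C <= rstar r.
Proof.
  intros hG hr1 hfG.
  assert (hia : 0 < / a) by (apply Rinv_0_lt_compat; lra).
  exists (Rabs (rstar r1) + r1 / G).
  split; [apply Rplus_le_le_0_compat; [apply Rabs_pos | apply Rdiv_le_0_compat; lra]|].
  intros r hr.
  assert (rstar r1 + / G * (r - r1) <= rstar r).
  { apply (growth_ge_of_deriv_ge rstar (fun s => / f (/ s)));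
      [lra | intros; apply hrstar; lra |].
    intros s hs. left. apply Rinv_lt_contravar; [|apply hfG; lra].
    apply Rmult_lt_0_compat; [|lra].
    destruct (inv_beyond a s ha ltac:(lra)). apply hf_pos. lra. }
  pose proof (Rle_abs (- rstar r1)). rewrite Rabs_Ropp in *.
  unfold Rdiv in *. lra.
Qed.

Lemma omega_points_scaled (C G u0 u Rc : R) :
  0 < G -> (forall r, / a < r -> rstar r <= C + r / G) ->
  in_Omega a rstar u0 u Rc -> 0 < Rc ->
  G * (- u0 - C) < / Rc /\ - (/ G + Rc * C) <= Rc * u.
Proof.
  intros hG hup [[_ hRa] [hu [hR0 | [_ ht]]]] hRc; [lra|].
  assert (hra : / a < / Rc) by (apply Rinv_lt_contravar; nra).
  pose proof (hup (/ Rc) hra) as hbound.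
  assert (hrR : Rc * / Rc = 1) by (field; lra).
  split.
  - replace (/ Rc) with (G * (/ Rc / G)) by (field; lra).
    apply Rmult_lt_compat_l; lra.
  - assert (Rc * (- u) <= Rc * (C + / Rc / G)) by (apply Rmult_le_compat_l; lra).
    replace (Rc * (C + / Rc / G)) with (Rc * C + / G) in * by (field; lra).
    lra.
Qed.

Lemma omega_point_on_ray (G G' C r1 u0 : R) :
  0 < G < G' -> / a < r1 -> 0 <= C -> u0 < 0 ->
  (forall r, r1 <= r -> r / G - C <= rstar r) ->
  exists r, r1 <= r /\ in_Omega a rstar u0 (- r / G') (/ r).
Proof.
  intros hG hr1 hC hu0 hlow.
  assert (hgap : 0 < / G - / G').
  { assert (/ G' < / G); [apply Rinv_lt_contravar; nra | lra]. }
  assert (0 < / a) by (apply Rinv_0_lt_compat; lra).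
  assert (0 < G' * (- u0)) by (apply Rmult_lt_0_compat; lra).
  assert (0 <= C / (/ G - / G')) by (apply Rdiv_le_0_compat; lra).
  set (r := r1 + G' * (- u0) + C / (/ G - / G')).
  assert (hr : r1 <= r /\ G' * (- u0) < r) by (unfold r; lra).
  exists r. split; [apply hr|].
  destruct (inv_beyond a r ha ltac:(lra)).
  split; [lra|]. split.
  - assert (- u0 < r / G'); [|lra].
    apply (Rmult_lt_reg_l G'); [lra|].
    replace (G' * (r / G')) with r by (field; lra). lra.
  - right. split; [lra|]. rewrite Rinv_inv.
    pose proof (hlow r (proj1 hr)).
    assert (C <= r * (/ G - / G')).
    { assert (hCr : C / (/ G - / G') <= r) by (unfold r; lra).
      apply (Rmult_le_compat_r (/ G - / G')) in hCr; [|lra].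
      unfold Rdiv in hCr. rewrite Rmult_assoc, Rinv_l, Rmult_1_r in hCr by lra.
      exact hCr. }
    unfold Rdiv in *. lra.
Qed.

(* Analyticity is only used through the continuity of f at 0. *)
Hypothesis hf_an : analytic_on_0a a f.

Lemma uniformly_timelike_of_f0_gt :
  3 / 4 < f 0 ->
  exists u0 c, u0 < 0 /\ 0 < c /\
    forall u Rc th, in_Omega a rstar u0 u Rc -> gKK f u Rc th >= c * u ^ 2.
Proof.
  intros hF.
  set (G := (f 0 + 3 / 4) / 2).
  destruct (analytic_between_near_0 a f G (f 0 + 1) ha hf_an) as [del [hdel hfG]];
    [unfold G; lra|].
  destruct (far_radius a del ha hdel) as [r1 [hr1 hfar]].
  destruct (rstar_upper_linear G r1) as [C [hC hup]]; [unfold G; lra | exact hr1 | |].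
  { intros s hs. apply hfG. pose proof (hfar s hs). destruct (inv_beyond a s ha); lra. }
  destruct (kquad_uniform_margin G) as [k [eta [hk [heta hmargin]]]]; [unfold G; lra|].
  set (N := / del + C / eta + 1).
  assert (0 < / del) by (apply Rinv_0_lt_compat; lra).
  assert (0 <= C / eta) by (apply Rdiv_le_0_compat; lra).
  exists (- (C + N / G)), (4 * k).
  split; [assert (0 < N / G) by (apply Rdiv_lt_0_compat; unfold N, G; lra); lra|].
  split; [lra|].
  intros u Rc th hO. rewrite gKK_kquad. pose proof (pow2_ge_0 u).
  destruct (Req_dec Rc 0) as [-> | hR0].
  { unfold kquad. rewrite Rmult_0_l. nra. }
  assert (hRc : 0 < Rc) by (destruct hO as [[? _] _]; lra).
  destruct (omega_points_scaled C G _ u Rc ltac:(unfold G; lra) hup hO hRc) as [hfarRc hx].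
  replace (G * (- - (C + N / G) - C)) with N in hfarRc by (field; unfold G; lra).
  assert (hRN : Rc * N < 1).
  { replace 1 with (Rc * / Rc) by (field; lra). apply Rmult_lt_compat_l; lra. }
  assert (hRdel : Rc < del).
  { apply (Rmult_lt_reg_r (/ del)); [lra|]. rewrite Rinv_r by lra.
    unfold N in hRN. nra. }
  assert (hRC : Rc * C <= eta).
  { assert (Rc * (C / eta) < 1) by (unfold N in hRN; nra).
    replace (Rc * C) with (Rc * (C / eta) * eta) by (field; lra). nra. }
  assert (hq : k <= kquad (f Rc) (Rc * u)).
  { apply Rle_trans with (kquad G (Rc * u)); [apply hmargin; lra|].
    apply kquad_mono. left. apply hfG. lra. }
  nra.
Qed.

Lemma f0_gt_of_uniformly_timelike :
  (exists u0 c, u0 < 0 /\ 0 < c /\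
    forall u Rc th, in_Omega a rstar u0 u Rc -> gKK f u Rc th >= c * u ^ 2) ->
  3 / 4 < f 0.
Proof.
  intros [u0 [c [hu0 [hc Htl]]]].
  apply Rnot_le_lt. intros hF.
  assert (hF0 : 0 < f 0) by (apply hf_pos; lra).
  set (eps := c * f 0 / 16).
  assert (heps : 0 < eps) by (unfold eps; nra).
  set (G := f 0 + eps). set (G' := f 0 + 2 * eps).
  destruct (analytic_between_near_0 a f (f 0 - 1) G ha hf_an) as [del [hdel hfG]];
    [unfold G; lra|].
  destruct (far_radius a del ha hdel) as [r1 [hr1 hfar]].
  destruct (rstar_lower_linear G r1) as [C [hC hlow]]; [unfold G; lra | exact hr1 | |].
  { intros s hs. apply hfG. pose proof (hfar s hs). destruct (inv_beyond a s ha); lra. }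
  destruct (omega_point_on_ray G G' C r1 u0) as [r [hr hO]];
    [unfold G, G'; lra | exact hr1 | exact hC | exact hu0 | exact hlow |].
  assert (hrpos : 0 < r) by (assert (0 < / a) by (apply Rinv_0_lt_compat; lra); lra).
  assert (hr0 : 0 < / r < del).
  { pose proof (hfar r hr). destruct (inv_beyond a r ha ltac:(lra)); lra. }
  specialize (Htl _ _ 0 hO). rewrite gKK_kquad in Htl.
  replace (/ r * (- r / G')) with (- / G') in Htl
    by (field; unfold G'; split; lra).
  assert (hq : kquad (f (/ r)) (- / G') <= c / 8).
  { apply Rle_trans with (kquad G (- / G')).
    - apply kquad_mono. left. apply hfG. lra.
    - replace (c / 8) with (2 * eps / f 0) by (unfold eps; field; lra).
      apply kquad_below_threshold; lra. }
  assert (0 < (- r / G') ^ 2).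
  { apply pow2_gt_0. apply Rmult_integral_contrapositive_currified;
      [lra | apply Rinv_neq_0_compat; unfold G'; lra]. }
  nra.
Qed.

End Exterior.

Theorem lemma3 (a : R) (f rstar : R -> R)
  (ha : 0 < a)
  (hf_an : analytic_on_0a a f)
  (hf_pos : forall x, 0 <= x < a -> 0 < f x)
  (hrstar : forall r, / a < r -> is_derive rstar r (/ f (/ r))) :
  (forall u Rc th, 0 <= Rc < a ->
     gKK f u Rc th = 4 * u ^ 2 * (1 + Rc * u + / 4 * Rc ^ 2 * u ^ 2 * f Rc))
  /\
  (f 0 > 3 / 4 <->
   exists u0 c, u0 < 0 /\ 0 < c /\
     forall u Rc th, in_Omega a rstar u0 u Rc ->
       gKK f u Rc th >= c * u ^ 2).
Proof.
  split.
  - intros u Rc th _. apply gKK_formula.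
  - split.
    + apply (uniformly_timelike_of_f0_gt a f rstar ha hf_pos hrstar hf_an).
    + apply (f0_gt_of_uniformly_timelike a f rstar ha hf_pos hrstar hf_an).
Qed.
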